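(* Let $f_1,f_2\in R$ and let $l_1,l_2,k_1,k_2$ be positive simple functions. If $l_1\le f_1$ and $l_2\le f_2$, then $l_1+l_2\le f_1+f_2$. If $f_1\le k_1$ and $f_2\le k_2$, then $f_1+f_2\le k_1+k_2$. (Here $l_1+l_2$ denotes the concatenation of the formal sums.)
   Context: $R$ is a Riesz space over $\mathbb{Q}$ with strong unit $1$; rationals $r$ are identified with $r\cdot1$. $\mathrm{Spec}(R)$ is the distributive lattice generated by $D(a)$, $a\in R$, subject to $D(1)=1$; $D(a)\wedge D(-a)=0$; $D(a+b)\le D(a)\vee D(b)$; $D(a)=0$ if $a\le0$; $D(a\vee b)=D(a)\vee D(b)$. $B$ is the Boolean algebra freely generated by $\mathrm{Spec}(R)$; $(f>r):=D(f-r)$, $(f<r):=D(r-f)$, $(f\le r):=\neg(f>r)$, $(f\ge r):=\neg(f<r)$. A positive simple function is a formal finite sum $\sum_i r_ix_i$ with rationals $r_i\ge0$, $x_i\in B$; for a finite index set $I$, $x_I:=\bigwedge_{i\in I}x_i$ ($x_\emptyset=1$), $r_I:=\sum_{i\in I}r_i$ ($r_\emptyset=0$). For $f\in R$: $\sum_ir_ix_i\le f$ iff $x_I\le(f\ge r_I)$ for every finite index set $I$; $f\le\sum_js_jy_j$ iff $1=\bigvee_J((f\le s_J)\wedge y_J)$, the join over all finite index sets $J$. *)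

From HB Require Import structures.
From mathcomp Require Import all_boot all_order all_algebra.
Unset Strict Implicit. Unset Printing Implicit Defensive.
Import Order.TTheory GRing.Theory Num.Theory.
Local Open Scope ring_scope.

Record is_riesz (V : lmodType rat) (le : rel V) (vjoin : V -> V -> V)
    (one : V) : Prop := IsRiesz {
  le_refl : forall x, le x x;
  le_anti : forall x y, le x y -> le y x -> x = y;
  le_trans : forall x y z, le x y -> le y z -> le x z;
  le_add : forall x y z, le x y -> le (x + z) (y + z);
  le_scale : forall (r : rat) x, 0 <= r -> le 0 x -> le 0 (r *: x);
  join_ubl : forall x y, le x (vjoin x y);
  join_ubr : forall x y, le y (vjoin x y);
  join_lub : forall x y z, le x z -> le y z -> le (vjoin x y) z;
  one_pos : le 0 one;
  one_strong : forall a, exists n : nat, le a (n%:R *: one)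
}.

(* rationals r are identified with r * 1 *)
Definition qcst (V : lmodType rat) (one : V) (r : rat) : V := r *: one.

(* B = the Boolean algebra freely generated by Spec(R), i.e. the Boolean
   algebra presented by generators D(a), a in R, and the defining relations
   of Spec(R).  Elements are Boolean terms; [ble] is derivable inequality
   (Boolean algebra axioms + relations), equality in B is [beq]. *)
Inductive bterm (V : Type) : Type :=
| Dg : V -> bterm V
| Btop : bterm V
| Bbot : bterm V
| Bmeet : bterm V -> bterm V -> bterm V
| Bjoin : bterm V -> bterm V -> bterm V
| Bneg : bterm V -> bterm V.
Arguments Dg {V}. Arguments Bmeet {V}. Arguments Bjoin {V}. Arguments Bneg {V}.

Notation simple V := (seq (rat * bterm V)).

Section B.
Variables (V : lmodType rat) (le : rel V) (vjoin : V -> V -> V) (one : V).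

Inductive ble : bterm V -> bterm V -> Prop :=
| ble_refl x : ble x x
| ble_trans x y z : ble x y -> ble y z -> ble x z
| ble_top x : ble x (Btop V)
| ble_bot x : ble (Bbot V) x
| ble_meetl x y : ble (Bmeet x y) x
| ble_meetr x y : ble (Bmeet x y) y
| ble_meetI x y z : ble z x -> ble z y -> ble z (Bmeet x y)
| ble_joinl x y : ble x (Bjoin x y)
| ble_joinr x y : ble y (Bjoin x y)
| ble_joinE x y z : ble x z -> ble y z -> ble (Bjoin x y) z
| ble_distr x y z : ble (Bmeet x (Bjoin y z)) (Bjoin (Bmeet x y) (Bmeet x z))
| ble_negbot x : ble (Bmeet x (Bneg x)) (Bbot V)
| ble_negtop x : ble (Btop V) (Bjoin x (Bneg x))
(* relations of Spec(R) *)
| ble_D1 : ble (Btop V) (Dg one)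
| ble_Dopp a : ble (Bmeet (Dg a) (Dg (- a))) (Bbot V)
| ble_Dadd a b : ble (Dg (a + b)) (Bjoin (Dg a) (Dg b))
| ble_Dnpos a : le a 0 -> ble (Dg a) (Bbot V)
| ble_Djoin1 a b : ble (Dg (vjoin a b)) (Bjoin (Dg a) (Dg b))
| ble_Djoin2 a b : ble (Bjoin (Dg a) (Dg b)) (Dg (vjoin a b)).

Definition beq (x y : bterm V) : Prop := ble x y /\ ble y x.

Definition fgt (f : V) (r : rat) : bterm V := Dg (f - qcst V one r).
Definition flt (f : V) (r : rat) : bterm V := Dg (qcst V one r - f).
Definition fle (f : V) (r : rat) : bterm V := Bneg (fgt f r).
Definition fge (f : V) (r : rat) : bterm V := Bneg (flt f r).

(* a formal sum  sum_i r_i x_i  is a list of pairs (r_i, x_i) *)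

Definition coef (s : simple V) (i : nat) : rat := (nth (0, Btop V) s i).1.
Definition elt (s : simple V) (i : nat) : bterm V := (nth (0, Btop V) s i).2.

Definition positive_simple (s : simple V) : Prop :=
  forall i : 'I_(size s), 0 <= coef s i.

Definition xI (s : simple V) (I : {set 'I_(size s)}) : bterm V :=
  \big[Bmeet/Btop V]_(i in I) elt s i.
Definition rI (s : simple V) (I : {set 'I_(size s)}) : rat :=
  \sum_(i in I) coef s i.

Definition simple_le (s : simple V) (f : V) : Prop :=
  forall I : {set 'I_(size s)}, ble (xI s I) (fge f (rI s I)).

Definition le_simple (f : V) (s : simple V) : Prop :=
  beq (Btop V) (\big[Bjoin/Bbot V]_(J : {set 'I_(size s)})
                   Bmeet (fle f (rI s J)) (xI s J)).
End B.

From mathcomp Require Import all_boot all_order all_algebra.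
Import GRing.Theory.
Local Open Scope ring_scope.

(* Both halves follow from one Boolean fact, obtained from the Spec(R)
   relation D(a+b) <= D(a) v D(b) by complementation:
       ~D(a) /\ ~D(b) <= ~D(a+b).
   With a := r1 - f1, b := r2 - f2 this is
       (f1 >= r1) /\ (f2 >= r2) <= (f1+f2 >= r1+r2),
   and with a := f1 - s1, b := f2 - s2 it is
       (f1 <= s1) /\ (f2 <= s2) <= (f1+f2 <= s1+s2).
   An index set I of the concatenation l1 ++ l2 splits into index sets
   I1 of l1 and I2 of l2 with r_I = r_I1 + r_I2 and x_I <= x_I1, x_I2; this
   gives the first half.  Conversely two index sets J1, J2 of k1 and k2
   glue into an index set J of k1 ++ k2 with s_J = s_J1 + s_J2 and
   y_J1 /\ y_J2 <= y_J; distributing the meet of the two covers of 1 given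
   by the hypotheses over their joins gives the second half. *)

Arguments ble_trans {V le vjoin one x} y {z}.
Arguments ble_refl {V le vjoin one}.
Arguments ble_top {V le vjoin one}.
Arguments ble_bot {V le vjoin one}.
Arguments ble_meetl {V le vjoin one}.
Arguments ble_meetr {V le vjoin one}.
Arguments ble_meetI {V le vjoin one x y z}.
Arguments ble_joinl {V le vjoin one}.
Arguments ble_joinr {V le vjoin one}.
Arguments ble_joinE {V le vjoin one x y z}.
Arguments ble_distr {V le vjoin one}.
Arguments ble_negbot {V le vjoin one}.
Arguments ble_negtop {V le vjoin one}.
Arguments ble_Dadd {V le vjoin one}.

Section Additivity.
Variables (V : lmodType rat) (le : rel V) (vjoin : V -> V -> V) (one : V).
Local Notation bl := (ble V le vjoin one).
Local Notation bt := (bterm V).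

Lemma bl_meetC (x y : bt) : bl (Bmeet x y) (Bmeet y x).
Proof. by apply: ble_meetI; [exact: ble_meetr | exact: ble_meetl]. Qed.

Lemma bl_meetS (x y x' y' : bt) :
  bl x x' -> bl y y' -> bl (Bmeet x y) (Bmeet x' y').
Proof.
move=> xx' yy'; apply: ble_meetI.
  exact: ble_trans _ (ble_meetl _ _) xx'.
exact: ble_trans _ (ble_meetr _ _) yy'.
Qed.

Lemma bl_le_neg (x y : bt) : bl (Bmeet y x) (Bbot V) -> bl y (Bneg x).
Proof.
move=> yx0; apply: (ble_trans (Bmeet y (Bjoin x (Bneg x)))).
  apply: ble_meetI; first exact: ble_refl.
  exact: ble_trans _ (ble_top y) (ble_negtop x).
apply: ble_trans _ (ble_distr _ _ _) _.
apply: ble_joinE; last exact: ble_meetr.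
exact: ble_trans _ yx0 (ble_bot _).
Qed.

(* The complemented form of the relation D(a+b) <= D(a) v D(b). *)
Lemma negD_add (a b : V) :
  bl (Bmeet (Bneg (Dg a)) (Bneg (Dg b))) (Bneg (Dg (a + b))).
Proof.
apply: bl_le_neg.
apply: (ble_trans (Bmeet (Bmeet (Bneg (Dg a)) (Bneg (Dg b)))
                         (Bjoin (Dg a) (Dg b)))).
  exact: bl_meetS (ble_refl _) (ble_Dadd _ _).
apply: ble_trans _ (ble_distr _ _ _) _.
apply: ble_joinE.
  apply: ble_trans _ _ (ble_negbot (Dg a)); apply: ble_meetI.
    exact: ble_meetr.
  exact: ble_trans _ (ble_meetl _ _) (ble_meetl _ _).
apply: ble_trans _ _ (ble_negbot (Dg b)); apply: ble_meetI.
  exact: ble_meetr.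
exact: ble_trans _ (ble_meetl _ _) (ble_meetr _ _).
Qed.

Lemma fge_add (f1 f2 : V) (r1 r2 : rat) :
  bl (Bmeet (fge V one f1 r1) (fge V one f2 r2))
     (fge V one (f1 + f2) (r1 + r2)).
Proof.
rewrite /fge.
have -> : flt V one (f1 + f2) (r1 + r2) = Dg ((r1 *: one - f1) + (r2 *: one - f2)).
  by rewrite /flt /qcst scalerDl opprD addrACA.
exact: negD_add.
Qed.

Lemma fle_add (f1 f2 : V) (s1 s2 : rat) :
  bl (Bmeet (fle V one f1 s1) (fle V one f2 s2))
     (fle V one (f1 + f2) (s1 + s2)).
Proof.
rewrite /fle.
have -> : fgt V one (f1 + f2) (s1 + s2) = Dg ((f1 - s1 *: one) + (f2 - s2 *: one)).
  by rewrite /fgt /qcst scalerDl opprD addrACA.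
exact: negD_add.
Qed.

Lemma bigmeet_le {I : finType} (P : pred I) (F : I -> bt) j :
  P j -> bl (\big[Bmeet/Btop V]_(i | P i) F i) (F j).
Proof.
rewrite unlock; have : j \in index_enum I by rewrite mem_index_enum.
elim: (index_enum I) => // a r IH; rewrite in_cons /= => /orP [/eqP <- | jr] Pj.
  by rewrite Pj; exact: ble_meetl.
case: (P a); last exact: IH.
exact: ble_trans _ (ble_meetr _ _) (IH jr Pj).
Qed.

Lemma bigjoin_ge {I : finType} (P : pred I) (F : I -> bt) j :
  P j -> bl (F j) (\big[Bjoin/Bbot V]_(i | P i) F i).
Proof.
rewrite unlock; have : j \in index_enum I by rewrite mem_index_enum.
elim: (index_enum I) => // a r IH; rewrite in_cons /= => /orP [/eqP <- | jr] Pj.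
  by rewrite Pj; exact: ble_joinl.
case: (P a); last exact: IH.
exact: ble_trans _ (IH jr Pj) (ble_joinr _ _).
Qed.

Lemma le_bigmeet {I : finType} (P : pred I) (F : I -> bt) z :
  (forall i, P i -> bl z (F i)) -> bl z (\big[Bmeet/Btop V]_(i | P i) F i).
Proof.
move=> zF; apply: (big_rec (fun w => bl z w)); first exact: ble_top.
by move=> i w Pi zw; apply: ble_meetI => //; apply: zF.
Qed.

Lemma bigjoin_le {I : finType} (P : pred I) (F : I -> bt) z :
  (forall i, P i -> bl (F i) z) -> bl (\big[Bjoin/Bbot V]_(i | P i) F i) z.
Proof.
move=> Fz; apply: (big_rec (fun w => bl w z)); first exact: ble_bot.
by move=> i w Pi wz; apply: ble_joinE => //; apply: Fz.
Qed.

Lemma meet_bigjoin {I : finType} (F : I -> bt) x :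
  bl (Bmeet x (\big[Bjoin/Bbot V]_i F i)) (\big[Bjoin/Bbot V]_i Bmeet x (F i)).
Proof.
apply: (big_rec2 (fun y z => bl (Bmeet x y) z)); first exact: ble_meetr.
move=> i y z _ xyz; apply: ble_trans _ (ble_distr _ _ _) _.
apply: ble_joinE; first exact: ble_joinl.
exact: ble_trans _ xyz (ble_joinr _ _).
Qed.

Lemma meet_bigjoins_le {I J : finType} (F : I -> bt) (G : J -> bt) z :
  (forall i j, bl (Bmeet (F i) (G j)) z) ->
  bl (Bmeet (\big[Bjoin/Bbot V]_i F i) (\big[Bjoin/Bbot V]_j G j)) z.
Proof.
move=> FGz; apply: ble_trans _ (meet_bigjoin _ _) _.
apply: bigjoin_le => j _; apply: ble_trans _ (bl_meetC _ _) _.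
apply: ble_trans _ (meet_bigjoin _ _) _.
by apply: bigjoin_le => i _; apply: ble_trans _ (bl_meetC _ _) (FGz i j).
Qed.

Definition castl (s1 s2 : simple V) (i : 'I_(size s1)) : 'I_(size (s1 ++ s2)) :=
  cast_ord (esym (size_cat s1 s2)) (lshift (size s2) i).
Definition castr (s1 s2 : simple V) (i : 'I_(size s2)) : 'I_(size (s1 ++ s2)) :=
  cast_ord (esym (size_cat s1 s2)) (rshift (size s1) i).

Definition setl (s1 s2 : simple V) (I : {set 'I_(size (s1 ++ s2))}) :
  {set 'I_(size s1)} := [set i | castl s1 s2 i \in I].
Definition setr (s1 s2 : simple V) (I : {set 'I_(size (s1 ++ s2))}) :
  {set 'I_(size s2)} := [set i | castr s1 s2 i \in I].

Definition set_cat {s1 s2 : simple V}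
    (J1 : {set 'I_(size s1)}) (J2 : {set 'I_(size s2)}) :
  {set 'I_(size (s1 ++ s2))} :=
  [set j | match split (cast_ord (size_cat s1 s2) j) with
           | inl i => i \in J1 | inr i => i \in J2 end].

Lemma setl_cat (s1 s2 : simple V) J1 J2 : setl s1 s2 (set_cat J1 J2) = J1.
Proof. by apply/setP => i; rewrite !inE /castl cast_ordKV (unsplitK (inl _ i)). Qed.

Lemma setr_cat (s1 s2 : simple V) J1 J2 : setr s1 s2 (set_cat J1 J2) = J2.
Proof. by apply/setP => i; rewrite !inE /castr cast_ordKV (unsplitK (inr _ i)). Qed.

Lemma nth_castl (s1 s2 : simple V) (i : 'I_(size s1)) :
  nth (0, Btop V) (s1 ++ s2) (castl s1 s2 i) = nth (0, Btop V) s1 i.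
Proof. by rewrite /= nth_cat ltn_ord. Qed.

Lemma nth_castr (s1 s2 : simple V) (i : 'I_(size s2)) :
  nth (0, Btop V) (s1 ++ s2) (castr s1 s2 i) = nth (0, Btop V) s2 i.
Proof. by rewrite /= nth_cat ltnNge leq_addr /= addKn. Qed.

Lemma rI_cat (s1 s2 : simple V) (I : {set 'I_(size (s1 ++ s2))}) :
  rI V (s1 ++ s2) I = rI V s1 (setl s1 s2 I) + rI V s2 (setr s1 s2 I).
Proof.
rewrite /rI (reindex (cast_ord (esym (size_cat s1 s2)))) /=; last first.
  by exists (cast_ord (size_cat s1 s2)) => i _; [apply: cast_ordKV | apply: cast_ordK].
rewrite big_split_ord; congr (_ + _); apply: eq_big => i; rewrite ?inE //.
  by move=> _; rewrite /coef -(nth_castl s1 s2).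
by move=> _; rewrite /coef -(nth_castr s1 s2).
Qed.

Lemma xI_setl (s1 s2 : simple V) (I : {set 'I_(size (s1 ++ s2))}) :
  bl (xI V (s1 ++ s2) I) (xI V s1 (setl s1 s2 I)).
Proof.
apply: le_bigmeet => i; rewrite inE => Ii.
by have := bigmeet_le (fun k => k \in I) (elt V (s1 ++ s2)) _ Ii; rewrite /elt nth_castl.
Qed.

Lemma xI_setr (s1 s2 : simple V) (I : {set 'I_(size (s1 ++ s2))}) :
  bl (xI V (s1 ++ s2) I) (xI V s2 (setr s1 s2 I)).
Proof.
apply: le_bigmeet => i; rewrite inE => Ii.
by have := bigmeet_le (fun k => k \in I) (elt V (s1 ++ s2)) _ Ii; rewrite /elt nth_castr.
Qed.

Lemma xI_set_cat (s1 s2 : simple V) J1 J2 :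
  bl (Bmeet (xI V s1 J1) (xI V s2 J2)) (xI V (s1 ++ s2) (set_cat J1 J2)).
Proof.
apply: le_bigmeet => j; rewrite inE; case: splitP => i ji Ji.
  have -> : j = castl s1 s2 i by apply: val_inj.
  rewrite /elt nth_castl; apply: ble_trans _ (ble_meetl _ _) _.
  exact: bigmeet_le (fun k => k \in J1) (elt V s1) _ Ji.
have -> : j = castr s1 s2 i by apply: val_inj.
rewrite /elt nth_castr; apply: ble_trans _ (ble_meetr _ _) _.
exact: bigmeet_le (fun k => k \in J2) (elt V s2) _ Ji.
Qed.

Lemma simple_le_cat (l1 l2 : simple V) (f1 f2 : V) :
  simple_le V le vjoin one l1 f1 -> simple_le V le vjoin one l2 f2 ->
  simple_le V le vjoin one (l1 ++ l2) (f1 + f2).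
Proof.
move=> l1f1 l2f2 I; rewrite (rI_cat l1 l2); apply: ble_trans _ _ (fge_add _ _ _ _).
apply: ble_meetI.
  exact: ble_trans _ (xI_setl _ _ _) (l1f1 _).
exact: ble_trans _ (xI_setr _ _ _) (l2f2 _).
Qed.

Lemma le_simple_cat (k1 k2 : simple V) (f1 f2 : V) :
  le_simple V le vjoin one f1 k1 -> le_simple V le vjoin one f2 k2 ->
  le_simple V le vjoin one (f1 + f2) (k1 ++ k2).
Proof.
move=> [cover1 _] [cover2 _]; split; last exact: ble_top.
apply: ble_trans _ (ble_meetI cover1 cover2) _.
apply: meet_bigjoins_le => J1 J2.
apply: ble_trans _ _ (bigjoin_ge _ _ (set_cat J1 J2) isT).
apply: ble_meetI.
  rewrite (rI_cat k1 k2) setl_cat setr_cat; apply: ble_trans _ _ (fle_add _ _ _ _).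
  exact: bl_meetS (ble_meetl _ _) (ble_meetl _ _).
apply: ble_trans _ _ (xI_set_cat _ _ _ _).
exact: bl_meetS (ble_meetr _ _) (ble_meetr _ _).
Qed.

End Additivity.

Theorem lemma4p9 (V : lmodType rat) (le : rel V) (vjoin : V -> V -> V)
  (one : V) (HR : is_riesz V le vjoin one)
  (f1 f2 : V) (l1 l2 k1 k2 : simple V)
  (Hl1 : positive_simple V l1) (Hl2 : positive_simple V l2)
  (Hk1 : positive_simple V k1) (Hk2 : positive_simple V k2) :
  (simple_le V le vjoin one l1 f1 -> simple_le V le vjoin one l2 f2 ->
     simple_le V le vjoin one (l1 ++ l2) (f1 + f2)) /\
  (le_simple V le vjoin one f1 k1 -> le_simple V le vjoin one f2 k2 ->
     le_simple V le vjoin one (f1 + f2) (k1 ++ k2)).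
Proof. by split; [exact: simple_le_cat | exact: le_simple_cat]. Qed.
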